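(* If $M$ is a simple rank-$r$ matroid that has no $3$-element circuit and no $3$-claw, then $|E(M)| \ge 2^{r-1}$. If equality holds, then $M \cong \mathrm{AG}(r-1,2)$.
   Context: A claw of a matroid $M$ is a set that is both a flat and an independent set of $M$; a $k$-claw is a claw of size $k$. $\mathrm{AG}(r-1,2)$ is the rank-$r$ binary affine geometry, obtained from the binary projective geometry $\mathrm{PG}(r-1,2)$ by deleting a hyperplane. *)

From HB Require Import structures.
From mathcomp Require Import all_boot all_order all_algebra.
Set Implicit Arguments. Unset Strict Implicit. Unset Printing Implicit Defensive.
Import GRing.Theory.

(* A matroid whose ground set is the whole finite type T, given by its
   independent sets (axioms I1-I3). *)
Record matroid (T : finType) := Matroid {
  indep : {set T} -> bool;
  indep0 : indep set0;
  indep_sub : forall A B : {set T}, A \subset B -> indep B -> indep A;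
  indep_aug : forall A B : {set T}, indep A -> indep B -> #|A| < #|B| ->
     exists2 e, e \in B :\: A & indep (e |: A)
}.

Section MatroidNotions.
Variables (T : finType) (M : matroid T).

Definition mrank (X : {set T}) : nat :=
  \max_(I : {set T} | (I \subset X) && indep M I) #|I|.

Definition rank_of : nat := mrank [set: T].

Definition circuit (C : {set T}) : bool :=
  ~~ indep M C && [forall D : {set T}, (D \proper C) ==> indep M D].

(* simple: no loops and no parallel pairs, i.e. every circuit has >= 3 elements *)
Definition simple : Prop := forall C, circuit C -> 2 < #|C|.

Definition flat (X : {set T}) : bool :=
  [forall e, (e \notin X) ==> (mrank X < mrank (e |: X))].

Definition claw (X : {set T}) : bool := flat X && indep M X.

End MatroidNotions.

(* Points of AG(n,2), of rank n+1: PG(n,2) is the set of nonzero vectors of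
   F_2^(n+1); deleting the hyperplane {x_0 = 0} leaves the vectors with x_0 = 1. *)
Definition AG_pts (n : nat) :=
  {v : 'rV['F_2]_n.+1 | v ord0 ord0 == 1%R}.

Definition iso_AG (T : finType) (M : matroid T) (n : nat) : Prop :=
  exists f : T -> AG_pts n, bijective f /\
    forall X : {set T}, indep M X = free [seq val (f x) | x <- enum X].

From mathcomp Require Import all_boot all_order all_algebra.
From mathcomp Require Import zify.
Set Implicit Arguments. Unset Strict Implicit. Unset Printing Implicit Defensive.
Import GRing.Theory.

(* Without circuits of size at most 3, every set of at most three points is
   independent; as no 3-element independent set is a flat, the closure of any
   three points a, b, c contains a fourth point d, and {a, b, c, d} is a
   dependent set in which each point is spanned by the other three.  If p is
   in F and e is outside cl F, then F, e and the fourth points of the triples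
   x, p, e (x in F - p) form a set of rank r(F) + 1 and size 2|F|, so
   repeated doubling from one point gives |E| >= 2^(r-1).
   In the extremal case every nonempty flat F has exactly 2^(r(F)-1) points,
   so 3 points span a 4-point plane, and a hyperplane H cannot contain exactly
   three points of a plane (by closure) nor exactly one (H doubled by an
   outside point of the plane is all of E).  Hence, for a basis b_0..b_(r-1)
   and the hyperplanes H_j = cl(B - b_j), the map
   x |-> (1, [x notin H_1], ..., [x notin H_(r-1)]) over F_2 sends d to the
   sum of the images of a, b and c; this makes it a bijection onto AG(r-1,2)
   under which closure becomes linear span. *)

Lemma cards3 (T : finType) (a b c : T) : a != b -> a != c -> b != c -> #|[set a; b; c]| = 3.
Proof. by move=> ab ac bc; rewrite -setUA cardsU1 cards2 bc !inE negb_or ab ac. Qed.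

Lemma cardsU1D (T : finType) (x : T) (X H : {set T}) : x \notin X ->
  #|(x |: X) :\: H| = (x \notin H) + #|X :\: H|.
Proof.
move=> xX; rewrite (cardsD1 x) !inE eqxx andbT; congr (_ + _); apply: eq_card => z.
by rewrite !inE; case: eqP => // ->; rewrite (negPf xX) andbF.
Qed.

Section RankClosure.
Variables (T : finType) (M : matroid T).
Local Notation indep := (indep M).
Local Notation mrank := (mrank M).
Implicit Types (X Y Z I J F : {set T}) (x y : T).

Lemma leq_card_mrank I X : I \subset X -> indep I -> #|I| <= mrank X.
Proof. by move=> sIX iI; apply: (@leq_bigmax_cond _ _ _ I); rewrite sIX iI. Qed.

Lemma mrank_basis X : exists I, [/\ I \subset X, indep I & #|I| = mrank X].
Proof.
have [|I] := @eq_bigmax_cond _ [pred I : {set T} | (I \subset X) && indep I] (fun I => #|I|).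
  by apply/card_gt0P; exists set0; rewrite inE sub0set indep0.
by rewrite inE => /andP[sIX iI] eI; exists I.
Qed.

Lemma mrank_leq_card X : mrank X <= #|X|.
Proof. by have [I [sIX _ <-]] := mrank_basis X; apply: subset_leq_card. Qed.

Lemma mrank_indep X : indep X -> mrank X = #|X|.
Proof. by move=> iX; apply/eqP; rewrite eqn_leq mrank_leq_card leq_card_mrank. Qed.

Lemma mrankS X Y : X \subset Y -> mrank X <= mrank Y.
Proof.
by move=> sXY; have [I [sIX iI <-]] := mrank_basis X; apply: leq_card_mrank (subset_trans sIX sXY) iI.
Qed.

Lemma mrank_extend I X : I \subset X -> indep I ->
  exists J, [/\ I \subset J, J \subset X, indep J & #|J| = mrank X].
Proof.
move=> sIX iI; have [K [sKX iK eK]] := mrank_basis X.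
move eI: (mrank X - #|I|) => m; elim: m I eI sIX iI => [|m IHm] I eI sIX iI.
  by exists I; split=> //; apply/eqP; rewrite eqn_leq leq_card_mrank // -subn_eq0 eI.
have ltIK : #|I| < #|K| by rewrite eK -subn_gt0 eI.
have [x /setDP[xK xI] ixI] := indep_aug iI iK ltIK.
have eIx : mrank X - #|x |: I| = m by rewrite cardsU1 xI subnS eI.
have sIxX : x |: I \subset X by rewrite subUset sub1set (subsetP sKX) ?sIX.
have [J [sIxJ sJX iJ eJ]] := IHm _ eIx sIxX ixI.
by exists J; split=> //; apply: subset_trans sIxJ; apply: subsetUr.
Qed.

Lemma mrankU1 x X : mrank (x |: X) <= (mrank X).+1.
Proof.
have [J [sJ iJ <-]] := mrank_basis (x |: X).
have : #|J :\ x| <= mrank X.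
  apply: leq_card_mrank; last exact: indep_sub (subD1set J x) iJ.
  by rewrite subDset.
by rewrite (cardsD1 x J); case: (x \in J) => /= ?; lia.
Qed.

Definition cl X := [set x | mrank (x |: X) <= mrank X].

Lemma subset_cl X : X \subset cl X.
Proof. by apply/subsetP => x xX; rewrite inE (setUidPr _) ?sub1set. Qed.

Lemma mrank_le_cl X Z : Z \subset cl X -> mrank Z <= mrank X.
Proof.
move=> sZ; apply: leq_trans (mrankS (subsetUr X Z)) _.
have [I [sIX iI eI]] := mrank_basis X.
have [J [sIJ sJ iJ <-]] := mrank_extend (subset_trans sIX (subsetUl X Z)) iI.
rewrite -eI leqNgt; apply/negP => ltIJ.
have [x /setDP[xJ xI]] : exists x, x \in J :\: I.
  by apply/set0Pn; rewrite -card_gt0 cardsD (setIidPr sIJ) subn_gt0.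
have xcl : x \in cl X.
  by move: (subsetP sJ x xJ); rewrite inE => /orP[/(subsetP (subset_cl X))|/(subsetP sZ)].
have : #|x |: I| <= mrank (x |: X).
  by apply: leq_card_mrank; [apply: setUS | apply: indep_sub iJ; rewrite subUset sub1set xJ].
rewrite cardsU1 xI eI add1n => ltX.
by move: xcl; rewrite inE leqNgt ltX.
Qed.

Lemma mrank_cl X : mrank (cl X) = mrank X.
Proof. by apply/eqP; rewrite eqn_leq mrank_le_cl ?mrankS ?subset_cl. Qed.

Lemma clS X Y : X \subset Y -> cl X \subset cl Y.
Proof.
move=> sXY; apply/subsetP => x; rewrite !inE => clx.
have [xY|xY] := boolP (x \in Y); first by rewrite (setUidPr _) ?sub1set.
have [I [sIX iI eI]] := mrank_basis X.
have [J [sIJ sJ iJ <-]] := mrank_extend (subset_trans sIX (subset_trans sXY (subsetUr [set x] Y))) iI.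
have [xJ|xJ] := boolP (x \in J).
  have xI : x \notin I by apply: contra xY => /(subsetP sIX) /(subsetP sXY).
  have : #|x |: I| <= mrank (x |: X).
    by apply: leq_card_mrank; [apply: setUS | apply: indep_sub iJ; rewrite subUset sub1set xJ].
  by rewrite cardsU1 xI eI add1n leqNgt ltnS clx.
apply: leq_card_mrank iJ; apply/subsetP => z zJ.
by move: (subsetP sJ z zJ); rewrite in_setU1 => /predU1P[zx|//]; rewrite -zx zJ in xJ.
Qed.

Lemma indepE X : indep X = (#|X| <= mrank X).
Proof.
apply/idP/idP => [iX | leX]; first by rewrite mrank_indep.
have [I [sIX iI eI]] := mrank_basis X.
suff -> : X = I by [].
by apply/esym/eqP; rewrite eqEcard sIX eI.
Qed.

Lemma indepU1 x X : x \notin X -> indep (x |: X) = indep X && (x \notin cl X).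
Proof.
move=> xX; rewrite inE -ltnNge; apply/idP/andP => [ixX | [iX lt]].
  have iX : indep X := indep_sub (subsetUr _ _) ixX.
  by rewrite (mrank_indep ixX) (mrank_indep iX) cardsU1 xX.
by rewrite indepE cardsU1 xX add1n -(mrank_indep iX).
Qed.

Lemma cl_exchange x y X : x \in cl (y |: X) -> x \notin cl X -> y \in cl (x |: X).
Proof.
rewrite !inE -ltnNge => xyX xX.
by rewrite setUCA; apply: leq_trans xyX (leq_trans (mrankU1 y X) xX).
Qed.

Lemma flatP F : reflect (cl F \subset F) (flat M F).
Proof.
apply: (iffP forallP) => [fF | sF x]; last first.
  by apply/implyP; apply: contraR; rewrite -leqNgt => clx; apply: (subsetP sF); rewrite inE.
by apply/subsetP => x; rewrite inE; apply: contraTT => xF; rewrite -ltnNge; apply: (implyP (fF x)).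
Qed.

Lemma flat_cl X : flat M (cl X).
Proof.
apply/flatP/subsetP => x; rewrite !inE mrank_cl => clx.
by apply: leq_trans (mrankS _) clx; apply: setUS; apply: subset_cl.
Qed.

Lemma flat_cl_sub F X : flat M F -> X \subset F -> cl X \subset F.
Proof. by move=> /flatP sF sXF; apply: subset_trans (clS sXF) sF. Qed.

End RankClosure.

Section NoSmallCircuitsOrClaws.
Variables (T : finType) (M : matroid T).
Hypotheses (simpleM : simple M)
  (no_circuit3 : forall C : {set T}, circuit M C -> #|C| != 3)
  (no_claw3 : forall X : {set T}, claw M X -> #|X| != 3).
Local Notation indep := (indep M).
Local Notation mrank := (mrank M).
Local Notation cl := (cl M).
Implicit Types (X S F H P W : {set T}) (a b c e p x : T).

Lemma indep_small X : #|X| <= 3 -> indep X.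
Proof.
move=> X3; apply: contraT => dX.
case: (arg_minnP (P := fun C : {set T} => ~~ indep C) (fun C => #|C|) dX) => C dC minC.
have cC : circuit M C.
  rewrite /circuit dC; apply/forallP => D; apply/implyP => ltDC.
  by apply: contraT => /minC; rewrite leqNgt proper_card.
by have := simpleM cC; have := no_circuit3 cC; have := minC X dX; lia.
Qed.

Lemma mrank1 x : mrank [set x] = 1.
Proof. by rewrite mrank_indep ?cards1 // indep_small ?cards1. Qed.

Lemma cl0 : cl set0 = set0.
Proof. by apply/setP => x; rewrite !inE setU0 mrank1 (mrank_indep (indep0 M)) cards0. Qed.

Lemma notin_cl_small x X : x \notin X -> #|X| <= 2 -> x \notin cl X.
Proof.
move=> xX X2; have := indep_small (X := x |: X).
by rewrite indepU1 // cardsU1 xX => /(_ X2) /andP[].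
Qed.

(* The default a is only used when a, b, c are not distinct. *)
Definition fourth a b c : T := odflt a [pick d in cl [set a; b; c] :\: [set a; b; c]].

Lemma fourthP a b c : a != b -> a != c -> b != c ->
  fourth a b c \in cl [set a; b; c] :\: [set a; b; c].
Proof.
move=> ab ac bc; rewrite /fourth; case: pickP => [d //|none]; exfalso.
have iS : indep [set a; b; c] by rewrite indep_small ?cards3.
have : ~~ flat M [set a; b; c].
  by apply/negP => fS; move: (@no_claw3 [set a; b; c]); rewrite /claw fS iS cards3 // => /(_ isT).
move=> /flatP/negP/subsetPn[d dcl dS].
by move: (none d); rewrite inE dS dcl.
Qed.

Lemma mem_cl_fourth a b c : a != b -> a != c -> b != c ->
  {in [set a; b; c], forall u, u \in cl (fourth a b c |: ([set a; b; c] :\ u))}.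
Proof.
move=> ab ac bc u uS; have /setDP[dcl dS] := fourthP ab ac bc.
apply: cl_exchange; first by rewrite setD1K.
apply: notin_cl_small; first by apply: contra dS => /setD1P[].
by move: (cards3 ab ac bc); rewrite (cardsD1 u [set a; b; c]) uS; lia.
Qed.

Definition fourth_closed W := forall a b c, a \in W -> b \in W -> c \in W ->
  a != b -> a != c -> b != c -> fourth a b c \in W.

Lemma fourth_closedT : fourth_closed [set: T].
Proof. by move=> *; rewrite inE. Qed.

Lemma flat_fourth_closed F : flat M F -> fourth_closed F.
Proof.
move=> fF a b c aF bF cF ab ac bc; have /setDP[dcl _] := fourthP ab ac bc.
by apply: (subsetP (flat_cl_sub fF _)) dcl; rewrite !subUset !sub1set aF bF cF.
Qed.

Definition double F p e := F :|: (e |: [set fourth x p e | x in F :\ p]).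

Section Doubling.
Variables (F : {set T}) (p e : T).
Hypotheses (pF : p \in F) (eF : e \notin cl F).

Lemma double_distinct x : x \in F :\ p -> [/\ x != p, x != e & p != e].
Proof.
have neF z : z \in F -> z != e.
  by move=> zF; apply: contraNneq eF => <-; apply: (subsetP (subset_cl M F)).
by case/setD1P => xp xF; split; rewrite ?neF.
Qed.

Lemma fourth_notin_cl x : x \in F :\ p -> fourth x p e \notin cl F.
Proof.
move=> xFp; have [xp xe pe] := double_distinct xFp.
have eS : e \in cl (fourth x p e |: ([set x; p; e] :\ e)).
  by apply: mem_cl_fourth; rewrite ?inE ?eqxx ?orbT.
apply: contra eF => dF; apply: (subsetP (flat_cl_sub (flat_cl M F) _)) eS.
have [_ xF] := setD1P xFp; have sF := subsetP (subset_cl M F).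
rewrite subUset sub1set dF; apply/subsetP => z /setD1P[ze].
by rewrite !in_setU !in_set1 (negPf ze) orbF => /orP[] /eqP->; apply: sF.
Qed.

Lemma fourth_inj : {in F :\ p &, injective (fun x => fourth x p e)}.
Proof.
move=> x y xFp yFp /= dxy; apply/eqP/negPn/negP => xy.
have [xp xe pe] := double_distinct xFp; have [yp ye _] := double_distinct yFp.
have [[_ xF] [_ yF]] := (setD1P xFp, setD1P yFp).
have [px py] : p != x /\ p != y by rewrite ![p == _]eq_sym.
set d := fourth x p e in dxy.
have cl_d u : u \in F :\ p -> fourth u p e = d -> u \in cl (d |: [set p; e]).
  move=> uFp <-; have [up ue _] := double_distinct uFp.
  apply: (subsetP (clS _ _)) (mem_cl_fourth up ue pe _); last by rewrite !inE eqxx.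
  by apply: setUS; apply/subsetP => z /setD1P[zu]; rewrite !inE (negPf zu).
have ipxy : indep (e |: [set p; x; y]).
  rewrite indepU1 ?indep_small ?cards3 //=; last by rewrite !inE !negb_or ![e == _]eq_sym pe xe ye.
  by apply: contra eF; apply: (subsetP (clS _ _)); rewrite !subUset !sub1set pF xF yF.
have : e |: [set p; x; y] \subset cl (d |: [set p; e]).
  have sp := subsetP (subset_cl M (d |: [set p; e])).
  rewrite !subUset !sub1set (cl_d x xFp erefl) (cl_d y yFp (esym dxy)).
  by rewrite !sp // !inE eqxx ?orbT.
move/mrank_le_cl/leq_trans/(_ (mrank_leq_card M _)).
rewrite (mrank_indep ipxy) cardsU1 cardsU1 cards2 cards3 //.
by rewrite !inE !negb_or ![e == _]eq_sym pe xe ye; case: (d != p); case: (d != e).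
Qed.

Lemma double_sub W : fourth_closed W -> F \subset W -> e \in W -> double F p e \subset W.
Proof.
move=> clW sFW eW; rewrite !subUset sFW sub1set eW /=.
apply/subsetP => _ /imsetP[x xFp ->]; have [xp xe pe] := double_distinct xFp.
by case/setD1P: xFp => _ xF; apply: clW; rewrite // (subsetP sFW).
Qed.

Lemma mrank_double : mrank (double F p e) = (mrank F).+1.
Proof.
apply/eqP; rewrite eqn_leq; apply/andP; split.
  apply: leq_trans _ (mrankU1 M e F); apply: mrank_le_cl.
  have sF := subset_cl M (e |: F).
  rewrite !subUset sub1set (subset_trans (subsetUr _ _) sF) (subsetP sF) ?setU11 //=.
  apply/subsetP => _ /imsetP[x xFp ->]; have [xp xe pe] := double_distinct xFp.
  have /setDP[dcl _] := fourthP xp xe pe.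
  apply: (subsetP (flat_cl_sub (flat_cl M _) _)) dcl; apply: subset_trans sF.
  by case/setD1P: xFp => _ xF; rewrite !subUset !sub1set !inE eqxx pF xF !orbT.
move: eF; rewrite inE -ltnNge => /leq_trans; apply; apply: mrankS.
by rewrite subUset sub1set in_setU in_setU1 eqxx orbT subsetUl.
Qed.

Lemma card_double : #|double F p e| = #|F|.*2.
Proof.
set D := [set fourth x p e | x in F :\ p].
have eD : e \notin D.
  apply/imsetP => -[x xFp ex]; have [xp xe pe] := double_distinct xFp.
  by have /setDP[_] := fourthP xp xe pe; rewrite -ex !inE eqxx orbT.
have FeD : F :&: (e |: D) = set0.
  apply/setP => z; rewrite in_set0 in_setI; apply/negP => /andP[zF].
  have zcl : z \in cl F := subsetP (subset_cl M F) z zF.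
  rewrite in_setU1 => /predU1P[ze | /imsetP[x xFp zx]]; first by move: eF; rewrite -ze zcl.
  by move: (fourth_notin_cl xFp); rewrite -zx zcl.
rewrite /double cardsU FeD cards0 subn0 cardsU1 eD card_in_imset; last exact: fourth_inj.
by rewrite -addnn (cardsD1 p F) pF.
Qed.

End Doubling.

Lemma card_fourth_closed W F : fourth_closed W -> F \subset W -> F != set0 ->
  2 ^ (mrank W - mrank F) * #|F| <= #|W|.
Proof.
move=> clW; move mF: (mrank W - mrank F) => m; elim: m F mF => [|m IHm] F mF sFW nF.
  by rewrite mul1n subset_leq_card.
have /subsetPn[e eW eF] : ~~ (W \subset cl F).
  by apply: contraTN (isT : 0 < m.+1) => /mrank_le_cl; rewrite -mF -subn_eq0 => /eqP->.
have [p pF] := set0Pn _ nF.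
have := IHm (double F p e); rewrite card_double // -mul2n mulnA -expnSr; apply.
- by rewrite mrank_double // subnS mF.
- exact: double_sub.
- by rewrite -card_gt0 card_double // double_gt0 card_gt0.
Qed.

Lemma exp_mrank_le_card W : fourth_closed W -> W != set0 -> 2 ^ (mrank W - 1) <= #|W|.
Proof.
move=> clW /set0Pn[x xW].
have := card_fourth_closed clW (_ : [set x] \subset W); rewrite cards1 muln1 mrank1.
by apply; rewrite ?sub1set // -card_gt0 cards1.
Qed.

Section Extremal.
Hypothesis card_extremal : #|T| = 2 ^ (mrank [set: T] - 1).

Lemma card_le_exp_mrank F : F != set0 -> #|F| <= 2 ^ (mrank F - 1).
Proof.
move=> nF; have rF : 0 < mrank F.
  by case/set0Pn: nF => x xF; rewrite -(mrank1 x) mrankS ?sub1set.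
have rFT : mrank F <= mrank [set: T] := mrankS M (subsetT F).
have := card_fourth_closed fourth_closedT (subsetT F) nF.
rewrite cardsT card_extremal (_ : mrank [set: T] - 1 = mrank [set: T] - mrank F + (mrank F - 1)).
  by rewrite expnD leq_pmul2l ?expn_gt0.
lia.
Qed.

Lemma fourth_closed_flat W : fourth_closed W -> W != set0 -> flat M W.
Proof.
move=> clW nW; apply/flatP/subsetP => x; rewrite inE; apply: contraTT => xW.
rewrite -ltnNge ltnNge; apply/negP => le.
have nxW : x |: W != set0 by apply/set0Pn; exists x; rewrite setU11.
have := leq_trans (card_le_exp_mrank nxW) (leq_pexp2l (isT : 0 < 2) (leq_sub2r 1 le)).
by rewrite cardsU1 xW => /leq_trans/(_ (exp_mrank_le_card clW nW)); rewrite ltnn.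
Qed.

Lemma card_flat F : flat M F -> F != set0 -> #|F| = 2 ^ (mrank F - 1).
Proof.
move=> fF nF; apply/eqP; rewrite eqn_leq card_le_exp_mrank //.
exact/exp_mrank_le_card/nF/flat_fourth_closed.
Qed.

Lemma card_cl3 S : #|S| = 3 -> #|cl S| = 4.
Proof.
move=> S3; have nS : cl S != set0.
  by apply: contraTneq (subset_cl M S) => ->; rewrite subset0 -cards_eq0 S3.
by rewrite card_flat ?flat_cl // mrank_cl mrank_indep ?S3 // indep_small ?S3.
Qed.

Lemma cl_sub3 S P : #|S| = 3 -> flat M P -> #|P| = 4 -> S \subset P -> cl S = P.
Proof. by move=> S3 fP P4 sSP; apply/eqP; rewrite eqEcard flat_cl_sub // card_cl3 ?P4. Qed.

Lemma plane_outside_neq1 H P : flat M H -> flat M P -> #|P| = 4 -> #|P :\: H| != 1.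
Proof.
move=> fH fP P4; apply/negP => /cards1P[u PHu].
have /setDP[uP uH] : u \in P :\: H by rewrite PHu set11.
have sPuH : P :\ u \subset H.
  apply/subsetP => z /setD1P[zu zP]; apply: contraR zu => zH.
  by rewrite -in_set1 -PHu inE zH zP.
have Pu3 : #|P :\ u| = 3 by move: P4; rewrite (cardsD1 u P) uP; lia.
have /(subsetP (flat_cl_sub fH sPuH)) : u \in cl (P :\ u) by rewrite (cl_sub3 Pu3 fP P4 (subD1set P u)).
by rewrite (negPf uH).
Qed.

Lemma double_hyperplane H w u : flat M H -> (mrank H).+1 = mrank [set: T] ->
  w \in H -> u \notin H -> double H w u = [set: T].
Proof.
move=> fH rH wH uH; have uclH : u \notin cl H.
  by apply: contra uH; apply: (subsetP (flat_cl_sub fH (subxx H))).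
apply/eqP; rewrite eqEcard subsetT cardsT card_double // card_flat //; last by apply/set0Pn; exists w.
by rewrite card_extremal -rH -mul2n -expnS !subn1 /= prednK // -(mrank1 w) mrankS ?sub1set.
Qed.

(* Two points u1, u2 of P outside H: as H doubled by u1 is everything, u2 is
   the fourth point of some x, w, u1 with x in H, and then x lies in P. *)
Lemma plane_inside_neq1 H P : flat M H -> (mrank H).+1 = mrank [set: T] ->
  flat M P -> #|P| = 4 -> #|P :&: H| != 1.
Proof.
move=> fH rH fP P4; apply/negP => /cards1P[w PHw].
have /setIP[wP wH] : w \in P :&: H by rewrite PHw set11.
have outH z : z \in P -> z != w -> z \notin H.
  by move=> zP zw; apply: contra zw => zH; rewrite -in_set1 -PHw inE zP zH.
have [u1 /setD1P[u1w u1P]] : exists u1, u1 \in P :\ w.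
  by apply/set0Pn; rewrite -card_gt0; move: P4; rewrite (cardsD1 w P) wP; lia.
have [u2 /setD1P[u2u1 /setD1P[u2w u2P]]] : exists u2, u2 \in P :\ w :\ u1.
  apply/set0Pn; rewrite -card_gt0; move: P4.
  by rewrite (cardsD1 w P) wP (cardsD1 u1 (P :\ w)) !inE u1w u1P; lia.
have u1H := outH _ u1P u1w.
have : u2 \in double H w u1 by rewrite double_hyperplane // inE.
rewrite in_setU in_setU1 (negPf (outH _ u2P u2w)) (negPf u2u1) /=.
case/imsetP => x /setD1P[xw xH] u2E.
have xu1 : x != u1 by apply: contraNneq u1H => <-.
have sP : fourth x w u1 |: ([set x; w; u1] :\ x) \subset P.
  rewrite -u2E subUset sub1set u2P; apply/subsetP => z /setD1P[zx].
  by rewrite !inE (negPf zx) /= => /orP[] /eqP->.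
have /(subsetP (flat_cl_sub fP sP)) xP : x \in cl (fourth x w u1 |: ([set x; w; u1] :\ x)).
  by apply: mem_cl_fourth; rewrite // ?inE ?eqxx // eq_sym.
by move: (outH x xP xw); rewrite xH.
Qed.

Lemma plane_outside_even H P : flat M H -> (mrank H).+1 = mrank [set: T] ->
  flat M P -> #|P| = 4 -> ~~ odd #|P :\: H|.
Proof.
move=> fH rH fP P4; have := cardsID H P; rewrite P4.
move: (plane_inside_neq1 fH rH fP P4) (plane_outside_neq1 fH fP P4).
by move: #|_ :&: _| #|_ :\: _| => i k; case: k => [|[|[|[|[|k]]]]] //=; lia.
Qed.

Lemma fourth_notin_hyperplane H a b c : flat M H -> (mrank H).+1 = mrank [set: T] ->
  a != b -> a != c -> b != c ->
  (fourth a b c \notin H) = odd ((a \notin H) + (b \notin H) + (c \notin H)).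
Proof.
move=> fH rH ab ac bc; have /setDP[dcl dS] := fourthP ab ac bc.
have S3 := cards3 ab ac bc; have P4 := card_cl3 S3.
have clSE : cl [set a; b; c] = fourth a b c |: [set a; b; c].
  by apply/esym/eqP; rewrite eqEcard subUset sub1set dcl subset_cl P4 cardsU1 dS S3.
have := plane_outside_even fH rH (flat_cl M _) P4.
rewrite clSE cardsU1D // -setUA cardsU1D ?inE ?negb_or ?ab ?ac // -[[set c]]setU0.
rewrite cardsU1D ?inE ?orbF // cardsU1D ?inE // set0D cards0 !addn0 !oddD !oddb.
by case: (_ \notin H); case: (a \notin H); case: (b \notin H); case: (c \notin H).
Qed.

End Extremal.

End NoSmallCircuitsOrClaws.

Section F2Span.
Variables (T : finType) (vT : vectType 'F_2) (f : T -> vT).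
Local Open Scope ring_scope.

Lemma F2_bool (k : 'F_2) : k = (k == 1)%:R.
Proof. by case: k => [[|[|]]] //= ?; apply/val_inj. Qed.

Lemma natrF2 m : (m%:R : 'F_2) = (odd m)%:R.
Proof. by rewrite -(Fp_nat_mod (isT : prime 2)) modn2. Qed.

Lemma addrr_F2 (v : vT) : v + v = 0.
Proof. by rewrite -mulr2n -scaler_nat natrF2 scale0r. Qed.

Lemma memv_span_F2 (s : seq T) v : uniq s -> v \in <<map f s>>%VS ->
  exists2 A : {set T}, A \subset [set:: s] & v = \sum_(x in A) f x.
Proof.
elim: s v => [|x s IHs] v /=.
  by rewrite span_nil memv0 => _ /eqP->; exists set0; rewrite ?sub0set ?big_set0.
case/andP => xs us; rewrite span_cons => /memv_addP[_ /vlineP[k ->] [w /(IHs _ us)[A sA ->] ->]].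
have xA : x \notin A by apply: contra xs => /(subsetP sA); rewrite inE.
rewrite set_cons [k]F2_bool; case: (k == 1).
  by exists (x |: A); rewrite ?setUS // big_setU1 ?scale1r.
by exists A; rewrite ?scale0r ?add0r // (subset_trans sA) ?subsetUr.
Qed.

End F2Span.

Section Coordinates.
Variables (T : finType) (M : matroid T) (n : nat) (B : {set T}).
Hypotheses (simpleM : simple M)
  (no_circuit3 : forall C : {set T}, circuit M C -> #|C| != 3)
  (no_claw3 : forall X : {set T}, claw M X -> #|X| != 3)
  (rankM : mrank M [set: T] = n.+1) (cardT : #|T| = 2 ^ (mrank M [set: T] - 1))
  (iB : indep M B) (cardB : #|B| = n.+1).
Local Notation mrank := (mrank M).
Local Notation cl := (cl M).
Local Notation fourth := (fourth M).

Definition bas (i : 'I_n.+1) : T := enum_val (cast_ord (esym cardB) i).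

Lemma basB i : bas i \in B.
Proof. exact: enum_valP. Qed.

Lemma bas_inj : injective bas.
Proof. by move=> i j /enum_val_inj/cast_ord_inj. Qed.

Definition hyp i := cl (B :\ bas i).

Lemma mrank_hyp i : (mrank (hyp i)).+1 = mrank [set: T].
Proof.
rewrite mrank_cl mrank_indep ?(indep_sub (subD1set B _) iB) // rankM.
by move: cardB; rewrite (cardsD1 (bas i) B) basB add1n => -[->].
Qed.

Lemma bas_hyp i j : (bas j \in hyp i) = (j != i).
Proof.
have [->|ji] := eqVneq j i; last first.
  by apply: (subsetP (subset_cl M _)); rewrite !inE basB (inj_eq bas_inj) ji.
by apply: negbTE; have := iB; rewrite -(setD1K (basB i)) indepU1 ?setD11 // => /andP[].
Qed.

Local Open Scope ring_scope.

(* hyp ord0 is not used: coordinate 0 is the affine coordinate of AG_pts. *)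
Definition coords x : 'rV['F_2]_n.+1 :=
  \row_j (if j == ord0 then 1 else (x \notin hyp j)%:R).

Lemma coords0 x : coords x ord0 ord0 = 1.
Proof. by rewrite mxE eqxx. Qed.

Lemma coords_bas j : coords (bas j) = \row_k ((k == ord0) || (k == j))%:R.
Proof. by apply/rowP => k; rewrite !mxE bas_hyp negbK [j == k]eq_sym; case: (k == ord0). Qed.

Lemma coords_fourth a b c : a != b -> a != c -> b != c ->
  coords (fourth a b c) = coords a + coords b + coords c.
Proof.
move=> ab ac bc; apply/rowP => j; rewrite !mxE; case: (j == ord0); first by apply/eqP.
rewrite (fourth_notin_hyperplane simpleM no_circuit3 no_claw3) ?flat_cl ?mrank_hyp //.
by rewrite -!natrD [RHS]natrF2.
Qed.

Lemma fourth_closed_sum (Z A : {set T}) : fourth_closed M Z -> A \subset Z -> odd #|A| ->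
  exists2 z, z \in Z & coords z = \sum_(x in A) coords x.
Proof.
move=> clZ; have [m Am] : exists m, (#|A| <= m)%N by exists #|A|.
elim: m A Am => [|m IHm] A Am sAZ oA; first by move: Am oA; rewrite leqn0 => /eqP->.
have [x xA] : exists x, x \in A by apply/set0Pn; rewrite -card_gt0; case: #|A| oA.
have [Ax|[y /setD1P[yx yA]]] := set_0Vmem (A :\ x).
  by exists x; rewrite ?(subsetP sAZ) // -(setD1K xA) Ax setU0 big_set1.
set A' := A :\ x :\ y.
have cardA : #|A| = #|A'|.+2 by rewrite (cardsD1 x A) xA (cardsD1 y (A :\ x)) !inE yx yA.
have [|||z zZ zE] := IHm A'.
- by move: Am; rewrite cardA ltnS => /ltnW.
- by apply: subset_trans sAZ; apply: subset_trans (subD1set _ y) (subD1set A x).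
- by move: oA; rewrite cardA /= negbK.
have sumA : \sum_(v in A) coords v = coords x + coords y + coords z.
  by rewrite (big_setD1 x xA) (big_setD1 y) ?inE ?yx //= -/A' -zE addrA.
have [zx|zx] := eqVneq z x.
  by exists y; rewrite ?(subsetP sAZ) // sumA zx addrAC addrr_F2 add0r.
have [zy|zy] := eqVneq z y.
  by exists x; rewrite ?(subsetP sAZ) // sumA zy -addrA addrr_F2 addr0.
have xy : x != y by rewrite eq_sym.
exists (fourth z x y); first by apply: clZ; rewrite // (subsetP sAZ).
by rewrite sumA coords_fourth // [RHS]addrC addrA.
Qed.

Lemma sum_coords_bas (I : {set 'I_n.+1}) :
  \sum_(i in I) coords (bas i) = \row_k (if k == ord0 then #|I|%:R else (k \in I)%:R).
Proof.
apply/rowP => k; rewrite summxE mxE; under eq_bigr do rewrite coords_bas mxE.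
have [_|_] := eqVneq k ord0; first by rewrite sumr_const.
have [kI|kI] := boolP (k \in I).
  rewrite (bigD1 k) //= eqxx big1 ?addr0 // => i /andP[_ ik].
  by rewrite eq_sym (negPf ik).
by rewrite big1 // => i iI; have [ki|//] := eqVneq k i; rewrite ki iI in kI.
Qed.

Lemma coords_surj (v : 'rV['F_2]_n.+1) : v ord0 ord0 = 1 -> exists x, coords x = v.
Proof.
move=> v0; set S := [set k | (k != ord0) && (v ord0 k == 1)].
pose I := if odd #|S| then S else ord0 |: S.
have oI : odd #|I|.
  by rewrite /I; case: ifP => // evS; rewrite cardsU1 !inE eqxx /= evS.
have obI : odd #|bas @: I| by rewrite card_imset //; apply: bas_inj.
have [x _ xE] := fourth_closed_sum (fourth_closedT M) (subsetT _) obI.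
exists x; rewrite xE big_imset /=; last by move=> i j _ _; apply: bas_inj.
rewrite sum_coords_bas; apply/rowP => k; rewrite mxE.
have [->|k0] := eqVneq k ord0; first by rewrite v0 natrF2 oI.
rewrite [RHS]F2_bool; congr (_%:R).
by rewrite /I; case: ifP => _; rewrite !inE (negPf k0).
Qed.

Lemma card_AG_pts : (2 ^ n <= #|{: AG_pts n}|)%N.
Proof.
pose row_of (b : {ffun 'I_n -> bool}) : 'rV['F_2]_n.+1 :=
  \row_j (if unlift ord0 j is Some k then (b k)%:R else 1).
have row_of0 b : row_of b ord0 ord0 == 1 by rewrite mxE unlift_none.
have pt_inj : injective (fun b => exist _ (row_of b) (row_of0 b) : AG_pts n).
  move=> b1 b2 /(congr1 val) /rowP /(_ (lift ord0 _)) E; apply/ffunP => k.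
  by move: (E k); rewrite !mxE liftK; case: (b1 k); case: (b2 k) => // /eqP.
by have := leq_card _ pt_inj; rewrite card_ffun card_bool card_ord.
Qed.

Definition to_AG x : AG_pts n := exist _ (coords x) (introT eqP (coords0 x)).

Lemma to_AG_bij : bijective to_AG.
Proof.
have to_AG_surj (v : AG_pts n) : exists x, to_AG x = v.
  by have [x xv] := coords_surj (eqP (valP v)); exists x; apply: val_inj.
pose inv v := odflt (bas ord0) [pick x | to_AG x == v].
have invK : cancel inv to_AG.
  move=> v; rewrite /inv; case: pickP => [x /eqP //|none].
  by have [x xv] := to_AG_surj v; move: (none x); rewrite xv eqxx.
apply: (bij_can_bij _ invK); apply: (inj_card_bij (can_inj invK)).
by rewrite cardT rankM subn1 card_AG_pts.
Qed.

Lemma coords_inj : injective coords.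
Proof. by move=> x y xy; apply: (bij_inj to_AG_bij); apply: val_inj. Qed.

Lemma mem_cl_span (s : seq T) x : uniq s ->
  (x \in cl [set:: s]) = (coords x \in <<map coords s>>%VS).
Proof.
move=> us; apply/idP/idP => [xcl | /(memv_span_F2 us)[A sA xA]].
  have [s0|ns] := eqVneq [set:: s] set0; first by rewrite s0 (cl0 simpleM no_circuit3) inE in xcl.
  set W := [set z | coords z \in <<map coords s>>%VS].
  have clW : fourth_closed M W.
    by move=> a b c; rewrite !inE => ? ? ? ab ac bc; rewrite coords_fourth // !memvD.
  have sW : [set:: s] \subset W.
    by apply/subsetP => z; rewrite !inE => zs; apply/memv_span/map_f.
  have nW : W != set0 by apply: contraNneq ns => W0; rewrite -subset0 -W0.
  have fW := fourth_closed_flat simpleM no_circuit3 no_claw3 cardT clW nW.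
  by have := subsetP (flat_cl_sub fW sW) x xcl; rewrite inE.
have oA : odd #|A|.
  move/rowP/(_ ord0): xA; rewrite coords0 summxE (eq_bigr (fun=> 1)) => [|y _]; last first.
    by rewrite coords0.
  by rewrite sumr_const natrF2; case: odd => // /eqP.
have clA : A \subset cl [set:: s] := subset_trans sA (subset_cl M _).
have clF := flat_fourth_closed simpleM no_circuit3 no_claw3 (flat_cl M [set:: s]).
have [z zcl zE] := fourth_closed_sum clF clA oA.
by rewrite -(coords_inj (etrans zE (esym xA))).
Qed.

Lemma indep_free (s : seq T) : uniq s -> indep M [set:: s] = free (map coords s).
Proof.
elim: s => [|x s IHs] /=; first by rewrite set_nil indep0 nil_free.
case/andP => xs us; have xs' : x \notin [set:: s] by rewrite inE.
by rewrite set_cons indepU1 // free_cons IHs // mem_cl_span // andbC.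
Qed.

End Coordinates.

Theorem lemma3p4 (T : finType) (M : matroid T) (r : nat) :
  1 <= r -> rank_of M = r -> simple M ->
  (forall C : {set T}, circuit M C -> #|C| != 3) ->
  (forall X : {set T}, claw M X -> #|X| != 3) ->
  2 ^ (r - 1) <= #|T| /\ (#|T| = 2 ^ (r - 1) -> iso_AG M r.-1).
Proof.
case: r => [//|n] _ rankM simpleM no_circuit3 no_claw3; rewrite /rank_of in rankM.
have [B [_ iB cardB]] := mrank_basis M [set: T]; rewrite rankM in cardB.
have [b _] : exists b, b \in B by apply/set0Pn; rewrite -card_gt0 cardB.
have nT : [set: T] != set0 by apply/set0Pn; exists b.
have := exp_mrank_le_card simpleM no_circuit3 no_claw3 (fourth_closedT M) nT.
rewrite cardsT rankM => leT; split=> // cardT.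
rewrite -rankM in cardT.
exists (to_AG M cardB); split; first exact: (to_AG_bij simpleM no_circuit3 no_claw3 rankM cardT iB).
by move=> X; rewrite -{1}(set_enum X) (indep_free simpleM no_circuit3 no_claw3 rankM cardT iB) ?enum_uniq.
Qed.
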